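(* Suppose $\vdash t:\exists\alpha A$ in the system $\mathsf{HA}+\mathsf{EM}_1^-$, where $t$ and $\exists\alpha A$ are closed. Then there exist a numeral $n$ and a term $u$ such that $\vdash u:A[n/\alpha]$.
   Context: $\mathsf{HA}+\mathsf{EM}_1^-$ is the Curry–Howard proof-term system for intuitionistic (Heyting) arithmetic over the language $\mathcal{L}$ ($0,\mathsf{S},+,\cdot,=$; atomic formulas are decidable and $\mathsf{P}^\bot$ denotes the complementary atomic predicate of $\mathsf{P}$): natural deduction rules for $\wedge,\to,\vee,\forall,\exists$ with the usual proof terms, an induction rule, Post rules for atomic formulas, hypothesis terms $\mathsf{H}_a^{\forall\alpha\mathsf{P}}:\forall\alpha\mathsf{P}$ (for $a:\forall\alpha\mathsf{P}$ in the context) and $\mathsf{W}_a^{\exists\alpha\mathsf{P}^\bot}:\exists\alpha\mathsf{P}^\bot$ (for $a:\exists\alpha\mathsf{P}^\bot$ in the context), and the rule $\mathsf{EM}_1^-$: from $\Gamma,a:\forall\alpha\mathsf{P}\vdash u:\exists\beta C$ and $\Gamma,a:\exists\alpha\mathsf{P}^\bot\vdash v:\exists\beta C$, with $\mathsf{P}$ and $C$ atomic, infer $\Gamma\vdash\mathsf{E}_a(u,v):\exists\beta C$. $\vdash t:A$ means $t$ is a proof term of $A$ in the empty context; a numeral is a term $\mathsf{S}^k0$. *)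

From Stdlib Require Import List Arith.
Import ListNotations.

Inductive term : Type :=
| TVar  : nat -> term
| TZero : term
| TSucc : term -> term
| TPlus : term -> term -> term
| TMult : term -> term -> term.

Fixpoint tsubst (s : nat -> term) (t : term) : term :=
  match t with
  | TVar n => s n
  | TZero => TZero
  | TSucc t1 => TSucc (tsubst s t1)
  | TPlus t1 t2 => TPlus (tsubst s t1) (tsubst s t2)
  | TMult t1 t2 => TMult (tsubst s t1) (tsubst s t2)
  end.

Definition tshift (t : term) : term := tsubst (fun k => TVar (S k)) t.

Definition up (s : nat -> term) : nat -> term :=
  fun n => match n with 0 => TVar 0 | S k => tshift (s k) end.

Fixpoint teval (rho : nat -> nat) (t : term) : nat :=
  match t with
  | TVar n => rho n
  | TZero => 0
  | TSucc t1 => S (teval rho t1)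
  | TPlus t1 t2 => teval rho t1 + teval rho t2
  | TMult t1 t2 => teval rho t1 * teval rho t2
  end.

Definition num (k : nat) : term := Nat.iter k TSucc TZero.

Inductive atom : Type :=
| AEq  : term -> term -> atom
| ANeq : term -> term -> atom.

Definition acompl (P : atom) : atom :=
  match P with AEq s t => ANeq s t | ANeq s t => AEq s t end.

Definition asubst (s : nat -> term) (P : atom) : atom :=
  match P with
  | AEq a b => AEq (tsubst s a) (tsubst s b)
  | ANeq a b => ANeq (tsubst s a) (tsubst s b)
  end.

Definition atrue (rho : nat -> nat) (P : atom) : Prop :=
  match P with
  | AEq a b => teval rho a = teval rho b
  | ANeq a b => teval rho a <> teval rho b
  end.

Inductive form : Type :=
| FAtom : atom -> form
| FAnd  : form -> form -> form
| FOr   : form -> form -> form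
| FImp  : form -> form -> form
| FAll  : form -> form
| FEx   : form -> form.

Fixpoint fsubst (s : nat -> term) (A : form) : form :=
  match A with
  | FAtom P => FAtom (asubst s P)
  | FAnd A1 A2 => FAnd (fsubst s A1) (fsubst s A2)
  | FOr A1 A2 => FOr (fsubst s A1) (fsubst s A2)
  | FImp A1 A2 => FImp (fsubst s A1) (fsubst s A2)
  | FAll B => FAll (fsubst (up s) B)
  | FEx B => FEx (fsubst (up s) B)
  end.

Definition fshift (A : form) : form := fsubst (fun k => TVar (S k)) A.

(* A[m/alpha], alpha being de Bruijn index 0 *)
Definition inst (m : term) (A : form) : form :=
  fsubst (fun n => match n with 0 => m | S k => TVar k end) A.

(* A[S alpha / alpha] (alpha = index 0, other variables unchanged) *)
Definition succ_inst (A : form) : form :=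
  fsubst (fun n => match n with 0 => TSucc (TVar 0) | k => TVar k end) A.

Fixpoint tclosed (d : nat) (t : term) : Prop :=
  match t with
  | TVar n => n < d
  | TZero => True
  | TSucc t1 => tclosed d t1
  | TPlus t1 t2 | TMult t1 t2 => tclosed d t1 /\ tclosed d t2
  end.

Definition aclosed (d : nat) (P : atom) : Prop :=
  match P with AEq a b | ANeq a b => tclosed d a /\ tclosed d b end.

Fixpoint fclosed (d : nat) (A : form) : Prop :=
  match A with
  | FAtom P => aclosed d P
  | FAnd A1 A2 | FOr A1 A2 | FImp A1 A2 => fclosed d A1 /\ fclosed d A2
  | FAll B | FEx B => fclosed (S d) B
  end.

(* ---------- Proof terms (Curry style; proof variables are names : nat) ---------- *)
Inductive pterm : Type :=
| PVar   : nat -> pterm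
| PHyp   : nat -> pterm
| PWit   : nat -> pterm
| PPair  : pterm -> pterm -> pterm
| PProj1 : pterm -> pterm
| PProj2 : pterm -> pterm
| PInl   : pterm -> pterm
| PInr   : pterm -> pterm
| PCase  : pterm -> nat -> pterm -> nat -> pterm -> pterm
| PLam   : nat -> pterm -> pterm
| PApp   : pterm -> pterm -> pterm
| PTLam  : pterm -> pterm
| PTApp  : pterm -> term -> pterm
| PTPair : term -> pterm -> pterm
| PTCase : pterm -> nat -> pterm -> pterm
| PInd   : pterm -> pterm -> term -> pterm
| PPost  : list pterm -> pterm
| PEM    : nat -> pterm -> pterm -> pterm.

Fixpoint pclosed (d : nat) (t : pterm) : Prop :=
  match t with
  | PVar _ | PHyp _ | PWit _ => True
  | PPair u v | PApp u v | PEM _ u v => pclosed d u /\ pclosed d v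
  | PProj1 u | PProj2 u | PInl u | PInr u | PLam _ u => pclosed d u
  | PCase u _ v _ w => pclosed d u /\ pclosed d v /\ pclosed d w
  | PTLam u => pclosed (S d) u
  | PTApp u m => pclosed d u /\ tclosed d m
  | PTPair m u => tclosed d m /\ pclosed d u
  | PTCase u _ v => pclosed d u /\ pclosed (S d) v
  | PInd u v m => pclosed d u /\ pclosed d v /\ tclosed d m
  | PPost us => (fix go (l : list pterm) : Prop :=
                   match l with [] => True | u :: l' => pclosed d u /\ go l' end) us
  end.

Definition ctx := list (nat * form).

Fixpoint lookup (G : ctx) (x : nat) : option form :=
  match G with
  | [] => None
  | (y, A) :: G' => if Nat.eqb x y then Some A else lookup G' x
  end.

Definition ctx_shift (G : ctx) : ctx := map (fun p => (fst p, fshift (snd p))) G.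

Definition post_valid (Ps : list atom) (P : atom) : Prop :=
  forall rho : nat -> nat, Forall (atrue rho) Ps -> atrue rho P.

Inductive typ : ctx -> pterm -> form -> Prop :=
| ty_var : forall G x A, lookup G x = Some A -> typ G (PVar x) A
| ty_hyp : forall G a P, lookup G a = Some (FAll (FAtom P)) ->
    typ G (PHyp a) (FAll (FAtom P))
| ty_wit : forall G a P, lookup G a = Some (FEx (FAtom P)) ->
    typ G (PWit a) (FEx (FAtom P))
| ty_pair : forall G u v A B, typ G u A -> typ G v B -> typ G (PPair u v) (FAnd A B)
| ty_proj1 : forall G u A B, typ G u (FAnd A B) -> typ G (PProj1 u) A
| ty_proj2 : forall G u A B, typ G u (FAnd A B) -> typ G (PProj2 u) B
| ty_inl : forall G u A B, typ G u A -> typ G (PInl u) (FOr A B)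
| ty_inr : forall G u A B, typ G u B -> typ G (PInr u) (FOr A B)
| ty_case : forall G u x v y w A B C,
    typ G u (FOr A B) -> typ ((x, A) :: G) v C -> typ ((y, B) :: G) w C ->
    typ G (PCase u x v y w) C
| ty_lam : forall G x u A B, typ ((x, A) :: G) u B -> typ G (PLam x u) (FImp A B)
| ty_app : forall G u v A B, typ G u (FImp A B) -> typ G v A -> typ G (PApp u v) B
| ty_tlam : forall G u A, typ (ctx_shift G) u A -> typ G (PTLam u) (FAll A)
| ty_tapp : forall G u m A, typ G u (FAll A) -> typ G (PTApp u m) (inst m A)
| ty_tpair : forall G m u A, typ G u (inst m A) -> typ G (PTPair m u) (FEx A)
| ty_tcase : forall G u x v A C,
    typ G u (FEx A) -> typ ((x, A) :: ctx_shift G) v (fshift C) ->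
    typ G (PTCase u x v) C
| ty_ind : forall G u v m A,
    typ G u (inst TZero A) -> typ G v (FAll (FImp A (succ_inst A))) ->
    typ G (PInd u v m) (inst m A)
| ty_post : forall G us Ps P,
    Forall2 (fun u Q => typ G u (FAtom Q)) us Ps -> post_valid Ps P ->
    typ G (PPost us) (FAtom P)
| ty_em : forall G a u v P C,
    typ ((a, FAll (FAtom P)) :: G) u (FEx (FAtom C)) ->
    typ ((a, FEx (FAtom (acompl P))) :: G) v (FEx (FAtom C)) ->
    typ G (PEM a u v) (FEx (FAtom C)).

From Stdlib Require Import List Arith Lia FunctionalExtensionality Classical.
Import ListNotations.

(* A formula A is realized under a valuation rho of its free variables when it
   is true in the standard model, with the extra demand (in the style of
   Kleene's realizability with truth, or Aczel's slash) that the chosen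
   disjunct, the antecedent of an implication and the witness instance of an
   existential also have derivable numeral instances.  Every derivable formula
   is realized, by induction on derivations; EM1^- is realized classically:
   either every instance of P is true, and then the closed form of forall
   alpha P is derived by lambda alpha over a Post rule, or some numeral n
   refutes P and (n, Post) derives exists alpha P^bot.  Realizing the closed
   formula exists alpha A then yields n and a derivation of A[n/alpha].
   Two syntactic facts feed this induction: derivability is closed under
   substituting derivations for hypotheses, and formulas differing only by
   terms of equal value are interderivable (at atoms by a Post rule), which
   lets every closed term be replaced by the numeral of its value. *)

Notation sshift := (fun k => TVar (S k)).

Definition scons (n : nat) (rho : nat -> nat) : nat -> nat :=
  fun i => match i with 0 => n | S k => rho k end.

Lemma tsubst_comp t s1 s2 :
  tsubst s2 (tsubst s1 t) = tsubst (fun i => tsubst s2 (s1 i)) t.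
Proof. induction t; simpl; f_equal; auto. Qed.

Lemma tsubst_id s t : (forall i, s i = TVar i) -> tsubst s t = t.
Proof. intros Hs; induction t; simpl; f_equal; auto. Qed.

Lemma up_comp s1 s2 i :
  tsubst (up s2) (up s1 i) = up (fun j => tsubst s2 (s1 j)) i.
Proof.
  destruct i as [|k]; simpl; [reflexivity|].
  unfold tshift; rewrite !tsubst_comp; reflexivity.
Qed.

Lemma fsubst_comp A s1 s2 :
  fsubst s2 (fsubst s1 A) = fsubst (fun i => tsubst s2 (s1 i)) A.
Proof.
  induction A in s1, s2 |- *; simpl; f_equal; auto.
  - destruct a; simpl; rewrite !tsubst_comp; reflexivity.
  - rewrite IHA; f_equal; extensionality i; apply up_comp.
  - rewrite IHA; f_equal; extensionality i; apply up_comp.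
Qed.

Lemma fsubst_id s A : (forall i, s i = TVar i) -> fsubst s A = A.
Proof.
  induction A in s |- *; intros Hs; simpl; f_equal; auto.
  - destruct a; simpl; rewrite !tsubst_id; auto.
  - apply IHA; intros [|i]; simpl; [|rewrite Hs]; reflexivity.
  - apply IHA; intros [|i]; simpl; [|rewrite Hs]; reflexivity.
Qed.

Lemma tsubst_ext_closed d s1 s2 t :
  tclosed d t -> (forall i, i < d -> s1 i = s2 i) -> tsubst s1 t = tsubst s2 t.
Proof. induction t; simpl; intuition; f_equal; auto. Qed.

Lemma fsubst_ext_closed d s1 s2 A :
  fclosed d A -> (forall i, i < d -> s1 i = s2 i) -> fsubst s1 A = fsubst s2 A.
Proof.
  induction A in d, s1, s2 |- *; simpl; intros HA Hs; f_equal;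
    intuition eauto.
  - destruct a; simpl in *; f_equal; intuition eauto using tsubst_ext_closed.
  - eapply IHA; [eassumption|]. intros [|i] Hi; simpl; [|rewrite Hs by lia]; reflexivity.
  - eapply IHA; [eassumption|]. intros [|i] Hi; simpl; [|rewrite Hs by lia]; reflexivity.
Qed.

Lemma teval_tsubst rho s t :
  teval rho (tsubst s t) = teval (fun i => teval rho (s i)) t.
Proof. induction t; simpl; auto. Qed.

Lemma teval_num rho n : teval rho (num n) = n.
Proof. induction n; simpl; auto. Qed.

Lemma tsubst_num s n : tsubst s (num n) = num n.
Proof. induction n; simpl; f_equal; auto. Qed.

Lemma teval_tsubst_num env rho t :
  teval env (tsubst (fun i => num (rho i)) t) = teval rho t.
Proof. induction t; simpl; auto using teval_num. Qed.

Lemma teval_up env s i :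
  teval env (up s i) = scons (env 0) (fun j => teval (fun k => env (S k)) (s j)) i.
Proof. destruct i; simpl; [|unfold tshift; rewrite teval_tsubst]; reflexivity. Qed.

Lemma atrue_asubst rho s P :
  atrue rho (asubst s P) <-> atrue (fun i => teval rho (s i)) P.
Proof. destruct P; simpl; rewrite !teval_tsubst; tauto. Qed.

Lemma asubst_acompl s P : asubst s (acompl P) = acompl (asubst s P).
Proof. destruct P; reflexivity. Qed.

Lemma post_valid_asubst s Ps P :
  post_valid Ps P -> post_valid (map (asubst s) Ps) (asubst s P).
Proof.
  intros HP rho HPs; apply atrue_asubst, HP.
  rewrite Forall_map in HPs; eapply Forall_impl; [|exact HPs].
  intros Q; apply atrue_asubst.
Qed.

Lemma fsubst_up_fshift s B : fsubst (up s) (fshift B) = fshift (fsubst s B).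
Proof. unfold fshift; rewrite !fsubst_comp; reflexivity. Qed.

Lemma fsubst_inst s m A :
  fsubst s (inst m A) = inst (tsubst s m) (fsubst (up s) A).
Proof.
  unfold inst; rewrite !fsubst_comp; f_equal; extensionality i.
  destruct i; simpl; [reflexivity|].
  unfold tshift; rewrite tsubst_comp; symmetry; apply tsubst_id; reflexivity.
Qed.

Lemma fsubst_succ_inst s A :
  fsubst (up s) (succ_inst A) = succ_inst (fsubst (up s) A).
Proof.
  unfold succ_inst; rewrite !fsubst_comp; f_equal; extensionality i.
  destruct i; simpl; [|unfold tshift; rewrite tsubst_comp]; reflexivity.
Qed.

Lemma inst_var0_up_shift B : inst (TVar 0) (fsubst (up sshift) B) = B.
Proof. unfold inst; rewrite fsubst_comp; apply fsubst_id; intros [|i]; reflexivity. Qed.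

Definition cmap (s : nat -> term) (G : ctx) : ctx :=
  map (fun p => (fst p, fsubst s (snd p))) G.

Lemma lookup_cmap s G x : lookup (cmap s G) x = option_map (fsubst s) (lookup G x).
Proof. induction G as [|[y B] G IH]; simpl; [|destruct (Nat.eqb x y)]; auto. Qed.

Lemma cmap_comp s1 s2 G : cmap s2 (cmap s1 G) = cmap (fun i => tsubst s2 (s1 i)) G.
Proof.
  unfold cmap; rewrite map_map; apply map_ext; intros [y B]; simpl.
  rewrite fsubst_comp; reflexivity.
Qed.

Lemma cmap_var G : cmap TVar G = G.
Proof.
  unfold cmap; rewrite <- (map_id G) at 2; apply map_ext; intros [y B]; simpl.
  rewrite fsubst_id; reflexivity.
Qed.

Definition ctx_incl (G G' : ctx) : Prop :=
  forall y B, lookup G y = Some B -> lookup G' y = Some B.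

Lemma ctx_incl_cons G G' x A : ctx_incl G G' -> ctx_incl ((x, A) :: G) ((x, A) :: G').
Proof. intros HG y B; simpl; destruct (Nat.eqb y x); auto. Qed.

Lemma ctx_incl_shift G G' : ctx_incl G G' -> ctx_incl (ctx_shift G) (ctx_shift G').
Proof.
  intros HG y B; change (ctx_shift ?H) with (cmap sshift H); rewrite !lookup_cmap.
  destruct (lookup G y) eqn:E; simpl; [rewrite (HG _ _ E)|]; easy.
Qed.

Fixpoint fresh (G : ctx) : nat :=
  match G with [] => 0 | (y, _) :: G' => S (Nat.max y (fresh G')) end.

Lemma lookup_lt_fresh G y B : lookup G y = Some B -> y < fresh G.
Proof.
  induction G as [|[z C] G IH]; simpl; [discriminate|].
  destruct (Nat.eqb y z) eqn:E; [apply Nat.eqb_eq in E|]; intros Hy; [|specialize (IH Hy)]; lia.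
Qed.

Lemma ctx_incl_fresh s G C : ctx_incl (cmap s G) ((fresh G, C) :: cmap s G).
Proof.
  intros y B Hy; simpl; destruct (Nat.eqb y (fresh G)) eqn:E; [|exact Hy].
  apply Nat.eqb_eq in E; rewrite lookup_cmap in Hy.
  destruct (lookup G y) eqn:Ey; [apply lookup_lt_fresh in Ey; lia | discriminate].
Qed.

(* The premises of [ty_post] are nested in [Forall2], for which the generated
   induction principle of [typ] gives no hypothesis; hence the explicit [fix]. *)
Lemma typ_weaken G t A : typ G t A -> forall G', ctx_incl G G' -> typ G' t A.
Proof.
  revert G t A; fix IH 4; intros G t A d G' HG; destruct d;
    try solve [econstructor; eauto using ctx_incl_cons, ctx_incl_shift].
  econstructor; [|eassumption]; clear H0.
  induction H; constructor; eauto.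
Qed.

(* Uniformity in the further substitution [s'] lets this invariant pass under
   individual binders, so no separate lemma on substituting terms for
   individual variables in derivations is needed. *)
Definition ctx_derives (s : nat -> term) (G G' : ctx) : Prop :=
  forall y B, lookup G y = Some B ->
  forall s', exists p, typ (cmap s' G') p (fsubst s' (fsubst s B)).

Lemma ctx_derives_lookup s G G' y B :
  ctx_derives s G G' -> lookup G y = Some B -> exists p, typ G' p (fsubst s B).
Proof.
  intros HG Hy; destruct (HG y B Hy TVar) as [p Hp]; exists p.
  rewrite cmap_var, fsubst_id in Hp; auto.
Qed.

Lemma ctx_derives_cons {s G G'} x A :
  ctx_derives s G G' -> ctx_derives s ((x, A) :: G) ((fresh G', fsubst s A) :: G').
Proof.
  intros HG y B; simpl; destruct (Nat.eqb y x).
  - intros [= <-] s'; exists (PVar (fresh G')); constructor; simpl.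
    rewrite Nat.eqb_refl; reflexivity.
  - intros Hy s'; destruct (HG y B Hy s') as [p Hp]; exists p.
    eapply typ_weaken; [exact Hp | apply ctx_incl_fresh].
Qed.

Lemma ctx_derives_shift {s G G'} :
  ctx_derives s G G' -> ctx_derives (up s) (ctx_shift G) (ctx_shift G').
Proof.
  intros HG y B' Hy s'; change (ctx_shift G) with (cmap sshift G) in Hy.
  rewrite lookup_cmap in Hy; destruct (lookup G y) as [B|] eqn:E; [|discriminate].
  injection Hy as <-; destruct (HG y B E (fun i => s' (S i))) as [p Hp]; exists p.
  change (ctx_shift G') with (cmap sshift G'); rewrite cmap_comp.
  change (fsubst sshift B) with (fshift B); rewrite fsubst_up_fshift.
  unfold fshift; rewrite fsubst_comp; exact Hp.
Qed.

Lemma typ_subst G t A :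
  typ G t A -> forall s G', ctx_derives s G G' -> exists t', typ G' t' (fsubst s A).
Proof.
  revert G t A; fix IH 4; intros G t A d s G' HG; destruct d;
    try solve [eapply ctx_derives_lookup; eassumption].
  - destruct (IH _ _ _ d1 s G' HG) as [u' Hu], (IH _ _ _ d2 s G' HG) as [v' Hv].
    exists (PPair u' v'); constructor; assumption.
  - destruct (IH _ _ _ d s G' HG) as [u' Hu]; exists (PProj1 u'); econstructor; eauto.
  - destruct (IH _ _ _ d s G' HG) as [u' Hu]; exists (PProj2 u'); econstructor; eauto.
  - destruct (IH _ _ _ d s G' HG) as [u' Hu]; exists (PInl u'); econstructor; eauto.
  - destruct (IH _ _ _ d s G' HG) as [u' Hu]; exists (PInr u'); econstructor; eauto.
  - destruct (IH _ _ _ d1 s G' HG) as [u' Hu],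
      (IH _ _ _ d2 s _ (ctx_derives_cons x A HG)) as [v' Hv],
      (IH _ _ _ d3 s _ (ctx_derives_cons y B HG)) as [w' Hw].
    exists (PCase u' (fresh G') v' (fresh G') w'); econstructor; eauto.
  - destruct (IH _ _ _ d s _ (ctx_derives_cons x A HG)) as [u' Hu].
    exists (PLam (fresh G') u'); econstructor; eauto.
  - destruct (IH _ _ _ d1 s G' HG) as [u' Hu], (IH _ _ _ d2 s G' HG) as [v' Hv].
    exists (PApp u' v'); econstructor; eauto.
  - destruct (IH _ _ _ d (up s) _ (ctx_derives_shift HG)) as [u' Hu].
    exists (PTLam u'); constructor; exact Hu.
  - destruct (IH _ _ _ d s G' HG) as [u' Hu].
    exists (PTApp u' (tsubst s m)); rewrite fsubst_inst; constructor; exact Hu.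
  - destruct (IH _ _ _ d s G' HG) as [u' Hu]; rewrite fsubst_inst in Hu.
    exists (PTPair (tsubst s m) u'); constructor; exact Hu.
  - destruct (IH _ _ _ d1 s G' HG) as [u' Hu],
      (IH _ _ _ d2 (up s) _ (ctx_derives_cons x A (ctx_derives_shift HG))) as [v' Hv].
    rewrite fsubst_up_fshift in Hv.
    exists (PTCase u' (fresh (ctx_shift G')) v'); econstructor; eauto.
  - destruct (IH _ _ _ d1 s G' HG) as [u' Hu], (IH _ _ _ d2 s G' HG) as [v' Hv].
    rewrite fsubst_inst in Hu; simpl in Hv; rewrite fsubst_succ_inst in Hv.
    exists (PInd u' v' (tsubst s m)); rewrite fsubst_inst; constructor; assumption.
  - assert (Hus : exists us', Forall2 (fun u Q => typ G' u (FAtom Q)) us' (map (asubst s) Ps)).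
    { clear H0; induction H as [|u Q us Ps Hu _ [us' Hus']]; [exists []; constructor|].
      destruct (IH _ _ _ Hu s G' HG) as [u' Hu'].
      exists (u' :: us'); constructor; assumption. }
    destruct Hus as [us' Hus]; exists (PPost us').
    econstructor; [exact Hus | apply post_valid_asubst; assumption].
  - destruct (IH _ _ _ d1 s _ (ctx_derives_cons a _ HG)) as [u' Hu],
      (IH _ _ _ d2 s _ (ctx_derives_cons a _ HG)) as [v' Hv].
    simpl in Hu, Hv; rewrite asubst_acompl in Hv.
    exists (PEM (fresh G') u' v'); econstructor; eauto.
Qed.

Definition entails (A B : form) : Prop := forall G, exists f, typ G f (FImp A B).

Lemma entails_atom P Q : post_valid [P] Q -> entails (FAtom P) (FAtom Q).
Proof.
  intros HPQ G; exists (PLam 0 (PPost [PVar 0])); constructor.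
  apply ty_post with [P]; [repeat constructor | exact HPQ].
Qed.

Lemma entails_and A1 A2 B1 B2 :
  entails A1 B1 -> entails A2 B2 -> entails (FAnd A1 A2) (FAnd B1 B2).
Proof.
  intros h1 h2 G; set (G0 := (0, FAnd A1 A2) :: G).
  destruct (h1 G0) as [f1 H1], (h2 G0) as [f2 H2].
  exists (PLam 0 (PPair (PApp f1 (PProj1 (PVar 0))) (PApp f2 (PProj2 (PVar 0))))).
  constructor; constructor; eapply ty_app; eauto; econstructor; constructor; reflexivity.
Qed.

Lemma entails_or A1 A2 B1 B2 :
  entails A1 B1 -> entails A2 B2 -> entails (FOr A1 A2) (FOr B1 B2).
Proof.
  intros h1 h2 G; set (G0 := (0, FOr A1 A2) :: G).
  destruct (h1 ((1, A1) :: G0)) as [f1 H1], (h2 ((1, A2) :: G0)) as [f2 H2].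
  exists (PLam 0 (PCase (PVar 0) 1 (PInl (PApp f1 (PVar 1))) 1 (PInr (PApp f2 (PVar 1))))).
  constructor; eapply ty_case; [constructor; reflexivity | |];
    constructor; eapply ty_app; eauto; constructor; reflexivity.
Qed.

Lemma entails_imp A1 A2 B1 B2 :
  entails B1 A1 -> entails A2 B2 -> entails (FImp A1 A2) (FImp B1 B2).
Proof.
  intros h1 h2 G; set (G1 := (1, B1) :: (0, FImp A1 A2) :: G).
  destruct (h1 G1) as [f1 H1], (h2 G1) as [f2 H2].
  exists (PLam 0 (PLam 1 (PApp f2 (PApp (PVar 0) (PApp f1 (PVar 1)))))).
  do 2 constructor; eapply ty_app; [exact H2|].
  eapply ty_app; [constructor; reflexivity|].
  eapply ty_app; [exact H1 | constructor; reflexivity].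
Qed.

Lemma entails_all A B : entails A B -> entails (FAll A) (FAll B).
Proof.
  intros h G; set (G0 := (0, FAll A) :: G).
  destruct (h (ctx_shift G0)) as [f Hf].
  exists (PLam 0 (PTLam (PApp f (PTApp (PVar 0) (TVar 0))))).
  do 2 constructor; eapply ty_app; [exact Hf|].
  pose proof (ty_tapp (ctx_shift G0) (PVar 0) (TVar 0) (fsubst (up sshift) A)) as Happ.
  rewrite inst_var0_up_shift in Happ; apply Happ; constructor; reflexivity.
Qed.

Lemma entails_ex A B : entails A B -> entails (FEx A) (FEx B).
Proof.
  intros h G; set (G0 := (0, FEx A) :: G).
  destruct (h ((1, A) :: ctx_shift G0)) as [f Hf].
  exists (PLam 0 (PTCase (PVar 0) 1 (PTPair (TVar 0) (PApp f (PVar 1))))).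
  constructor; eapply ty_tcase; [constructor; reflexivity|].
  constructor; rewrite inst_var0_up_shift.
  eapply ty_app; [exact Hf | constructor; reflexivity].
Qed.

Definition eval_equiv (s1 s2 : nat -> term) : Prop :=
  forall i env, teval env (s1 i) = teval env (s2 i).

Lemma eval_equiv_up s1 s2 : eval_equiv s1 s2 -> eval_equiv (up s1) (up s2).
Proof. intros Hs i env; rewrite !teval_up; destruct i; simpl; auto. Qed.

Lemma entails_fsubst A s1 s2 :
  eval_equiv s1 s2 -> entails (fsubst s1 A) (fsubst s2 A).
Proof.
  induction A in s1, s2 |- *; intros Hs; simpl.
  - apply entails_atom; intros env HF; apply Forall_inv, atrue_asubst in HF.
    apply atrue_asubst; replace (fun i => teval env (s2 i)) with (fun i => teval env (s1 i));
      [exact HF | extensionality i; apply Hs].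
  - apply entails_and; auto.
  - apply entails_or; auto.
  - apply entails_imp; [apply IHA1; intros i env; symmetry; apply Hs | auto].
  - apply entails_all, IHA, eval_equiv_up, Hs.
  - apply entails_ex, IHA, eval_equiv_up, Hs.
Qed.

Definition provable (A : form) : Prop := exists u, typ nil u A.

Lemma provable_entails A B : entails A B -> provable A -> provable B.
Proof.
  intros hAB [u Hu]; destruct (hAB nil) as [f Hf].
  exists (PApp f u); econstructor; eauto.
Qed.

Definition close (rho : nat -> nat) (A : form) : form := fsubst (fun i => num (rho i)) A.

Lemma provable_close_fsubst rho s A :
  provable (close rho (fsubst s A)) <-> provable (close (fun i => teval rho (s i)) A).
Proof.
  unfold close; rewrite fsubst_comp.
  split; apply provable_entails, entails_fsubst; intros i env;
    rewrite teval_tsubst_num, teval_num; reflexivity.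
Qed.

Lemma close_fshift n rho B : close (scons n rho) (fshift B) = close rho B.
Proof. unfold close, fshift; rewrite fsubst_comp; reflexivity. Qed.

Lemma close_succ_inst k rho A :
  close (scons k rho) (succ_inst A) = close (scons (S k) rho) A.
Proof.
  unfold close, succ_inst; rewrite fsubst_comp; f_equal.
  extensionality i; destruct i; reflexivity.
Qed.

Lemma inst_num_close k rho B :
  inst (num k) (fsubst (up (fun i => num (rho i))) B) = close (scons k rho) B.
Proof.
  unfold inst, close; rewrite fsubst_comp; f_equal; extensionality i.
  destruct i; simpl; [|unfold tshift; rewrite !tsubst_num]; reflexivity.
Qed.

Lemma fsubst_close s rho B : fsubst s (close rho B) = close rho B.
Proof.
  unfold close; rewrite fsubst_comp; f_equal; extensionality i; apply tsubst_num.
Qed.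

Lemma close_closed_inst k rho A : fclosed 1 A -> close (scons k rho) A = inst (num k) A.
Proof.
  intros HA; unfold close, inst; apply (fsubst_ext_closed 1); [exact HA|].
  intros [|i] Hi; [reflexivity | lia].
Qed.

Lemma typ_close_atom G rho Q : atrue rho Q -> typ G (PPost []) (close rho (FAtom Q)).
Proof.
  intros HQ; apply ty_post with []; [constructor|].
  intros env _; destruct Q; simpl in *; rewrite !teval_tsubst_num; exact HQ.
Qed.

Lemma provable_close_ex_intro n rho B :
  provable (close (scons n rho) B) -> provable (close rho (FEx B)).
Proof.
  intros [u Hu]; exists (PTPair (num n) u); constructor.
  rewrite inst_num_close; exact Hu.
Qed.

Lemma provable_close_all_elim n rho B :
  provable (close rho (FAll B)) -> provable (close (scons n rho) B).
Proof.
  intros [u Hu]; exists (PTApp u (num n)); rewrite <- inst_num_close.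
  constructor; exact Hu.
Qed.

Lemma provable_close_imp_elim rho A B :
  provable (close rho (FImp A B)) -> provable (close rho A) -> provable (close rho B).
Proof. intros [f Hf] [u Hu]; exists (PApp f u); econstructor; eauto. Qed.

Fixpoint realized (rho : nat -> nat) (A : form) : Prop :=
  match A with
  | FAtom P => atrue rho P
  | FAnd A B => realized rho A /\ realized rho B
  | FOr A B => realized rho A /\ provable (close rho A)
               \/ realized rho B /\ provable (close rho B)
  | FImp A B => realized rho A /\ provable (close rho A) -> realized rho B
  | FAll A => forall n, realized (scons n rho) A
  | FEx A => exists n, realized (scons n rho) A /\ provable (close (scons n rho) A)
  end.

Lemma teval_scons_up n rho s :
  (fun i => teval (scons n rho) (up s i)) = scons n (fun i => teval rho (s i)).
Proof. extensionality i; rewrite teval_up; reflexivity. Qed.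

Lemma realized_fsubst A rho s :
  realized rho (fsubst s A) <-> realized (fun i => teval rho (s i)) A.
Proof.
  induction A in rho, s |- *; simpl.
  - apply atrue_asubst.
  - rewrite IHA1, IHA2; tauto.
  - rewrite IHA1, IHA2, !provable_close_fsubst; tauto.
  - rewrite IHA1, IHA2, !provable_close_fsubst; tauto.
  - split; intros H n; specialize (H n); rewrite IHA, teval_scons_up in *; exact H.
  - split; intros [n H]; exists n; rewrite IHA, provable_close_fsubst, teval_scons_up in *;
      exact H.
Qed.

Lemma realized_fshift n rho B : realized (scons n rho) (fshift B) <-> realized rho B.
Proof. unfold fshift; rewrite realized_fsubst; reflexivity. Qed.

Lemma teval_inst_sub rho m :
  (fun i => teval rho (match i with 0 => m | S k => TVar k end)) = scons (teval rho m) rho.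
Proof. extensionality i; destruct i; reflexivity. Qed.

Lemma realized_inst rho m A :
  realized rho (inst m A) <-> realized (scons (teval rho m) rho) A.
Proof. unfold inst; rewrite realized_fsubst, teval_inst_sub; reflexivity. Qed.

Lemma provable_close_inst rho m A :
  provable (close rho (inst m A)) <-> provable (close (scons (teval rho m) rho) A).
Proof. unfold inst; rewrite provable_close_fsubst, teval_inst_sub; reflexivity. Qed.

Lemma realized_succ_inst k rho A :
  realized (scons k rho) (succ_inst A) <-> realized (scons (S k) rho) A.
Proof.
  unfold succ_inst; rewrite realized_fsubst.
  replace (fun i => _) with (scons (S k) rho); [reflexivity|].
  extensionality i; destruct i; reflexivity.
Qed.

Definition hyps_realized (rho : nat -> nat) (G : ctx) : Prop :=
  forall y B, lookup G y = Some B -> realized rho B /\ provable (close rho B).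

Lemma hyps_realized_cons rho G x A :
  hyps_realized rho G -> realized rho A -> provable (close rho A) ->
  hyps_realized rho ((x, A) :: G).
Proof.
  intros HG HA PA y B; simpl; destruct (Nat.eqb y x); [intros [= <-]; auto | apply HG].
Qed.

Lemma hyps_realized_shift n rho G :
  hyps_realized rho G -> hyps_realized (scons n rho) (ctx_shift G).
Proof.
  intros HG y B' Hy; change (ctx_shift G) with (cmap sshift G) in Hy.
  rewrite lookup_cmap in Hy; destruct (lookup G y) as [B|] eqn:E; [|discriminate].
  injection Hy as <-; change (fsubst sshift B) with (fshift B).
  rewrite realized_fshift, close_fshift; exact (HG y B E).
Qed.

Lemma typ_provable_close {G t A rho} :
  typ G t A -> hyps_realized rho G -> provable (close rho A).
Proof.
  intros d HG; apply (typ_subst _ _ _ d).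
  intros y B Hy s'; destruct (HG y B Hy) as [_ [p Hp]]; exists p.
  change (fsubst _ B) with (close rho B); rewrite fsubst_close; exact Hp.
Qed.

Lemma realized_em1 rho P : realized rho (FOr (FAll (FAtom P)) (FEx (FAtom (acompl P)))).
Proof.
  simpl; destruct (classic (forall n, atrue (scons n rho) P)) as [Hall | Hnot].
  - left; split; [exact Hall|].
    exists (PTLam (PPost [])); constructor; apply ty_post with []; [constructor|].
    intros env _; apply atrue_asubst.
    replace (fun i => _) with (scons (env 0) rho); [apply Hall|].
    extensionality i; rewrite teval_up; destruct i; simpl; [|rewrite teval_num]; reflexivity.
  - apply not_all_ex_not in Hnot as [n Hn].
    assert (Hc : atrue (scons n rho) (acompl P)) by (destruct P; simpl in *; lia).
    assert (Pc : provable (close (scons n rho) (FAtom (acompl P))))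
      by (exists (PPost []); apply typ_close_atom, Hc).
    right; split; [exists n; split; assumption | exact (provable_close_ex_intro _ _ _ Pc)].
Qed.

Lemma realized_induction rho A :
  realized rho (inst TZero A) -> provable (close rho (inst TZero A)) ->
  realized rho (FAll (FImp A (succ_inst A))) ->
  provable (close rho (FAll (FImp A (succ_inst A)))) ->
  forall k, realized (scons k rho) A /\ provable (close (scons k rho) A).
Proof.
  intros H0 P0 Hstep Pstep k; induction k as [|k [Hk Pk]].
  - exact (conj (proj1 (realized_inst rho TZero A) H0)
                (proj1 (provable_close_inst rho TZero A) P0)).
  - split.
    + apply realized_succ_inst, (Hstep k); split; assumption.
    + rewrite <- close_succ_inst; eapply provable_close_imp_elim; [|exact Pk].
      apply provable_close_all_elim with (B := FImp A (succ_inst A)); exact Pstep.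
Qed.

Theorem typ_realized G t A :
  typ G t A -> forall rho, hyps_realized rho G -> realized rho A.
Proof.
  revert G t A; fix IH 4; intros G t A d rho HG; destruct d;
    try solve [exact (proj1 (HG _ _ H))].
  - split; eauto.
  - exact (proj1 (IH _ _ _ d rho HG)).
  - exact (proj2 (IH _ _ _ d rho HG)).
  - left; split; [eauto | eapply typ_provable_close; eauto].
  - right; split; [eauto | eapply typ_provable_close; eauto].
  - destruct (IH _ _ _ d1 rho HG) as [[HA PA] | [HB PB]];
      [eapply IH; [exact d2|] | eapply IH; [exact d3|]]; apply hyps_realized_cons; auto.
  - intros [HA PA]; eapply IH; [exact d|]; apply hyps_realized_cons; auto.
  - exact (IH _ _ _ d1 rho HG (conj (IH _ _ _ d2 rho HG) (typ_provable_close d2 HG))).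
  - intros n; eapply IH; [exact d|]; apply hyps_realized_shift, HG.
  - apply realized_inst, (IH _ _ _ d rho HG).
  - exists (teval rho m); split;
      [apply realized_inst; eauto | apply provable_close_inst; eapply typ_provable_close; eauto].
  - destruct (IH _ _ _ d1 rho HG) as [n [Hn Pn]]; apply (realized_fshift n).
    eapply IH; [exact d2|]; apply hyps_realized_cons; [apply hyps_realized_shift|..]; auto.
  - apply realized_inst, realized_induction; eauto using typ_provable_close.
  - apply H0; clear H0; induction H as [|u Q us Ps Hu _ IHus]; constructor;
      [exact (IH _ _ _ Hu rho HG) | exact IHus].
  - destruct (realized_em1 rho P) as [[HA PA] | [HB PB]];
      [eapply IH; [exact d1|] | eapply IH; [exact d2|]]; apply hyps_realized_cons; auto.
Qed.

Theorem mainTheorem5 (t : pterm) (A : form) :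
  pclosed 0 t -> fclosed 0 (FEx A) -> typ nil t (FEx A) ->
  exists (k : nat) (u : pterm), typ nil u (inst (num k) A).
Proof.
  intros _ HA Ht.
  assert (Hnil : hyps_realized (fun _ => 0) nil) by (intros y B; discriminate).
  destruct (typ_realized _ _ _ Ht _ Hnil) as [k [_ [u Hu]]].
  exists k, u; rewrite <- (close_closed_inst k (fun _ => 0)); assumption.
Qed.
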